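(* Let $\mathcal{P}$ be a nonempty finite poset with $n=|\mathcal{P}|$, let $m=\max_{p\in\mathcal{P}}(|{\downarrow}p|+|{\uparrow}p|)$, and let $\mathcal{A},\mathcal{B}$ be dual families of downsets over $\mathcal{L}(\mathcal{P})$. Then $$\sum_{A\in\mathcal{A}}(3/4)^{|A|/m^2}+\sum_{B\in\mathcal{B}}e^{-(n-|B|)/m}\ \ge\ 1.$$
   Context: For a finite poset $\mathcal{P}$, $\mathcal{L}(\mathcal{P})$ is the lattice of all downsets of $\mathcal{P}$ ordered by inclusion. ${\downarrow}p=\{q:q\le p\}$, ${\uparrow}p=\{q:q\ge p\}$ (both contain $p$, so $m\ge2$). Two families $\mathcal{A},\mathcal{B}$ of downsets of $\mathcal{P}$ are dual over $\mathcal{L}(\mathcal{P})$ if $A\not\subseteq B$ for all $A\in\mathcal{A},B\in\mathcal{B}$, and for every downset $X$ of $\mathcal{P}$ either $X\subseteq B$ for some $B\in\mathcal{B}$ or $A\subseteq X$ for some $A\in\mathcal{A}$. *)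

From mathcomp Require Import all_boot.
From Stdlib Require Import Reals.
Set Implicit Arguments. Unset Strict Implicit. Unset Printing Implicit Defensive.

Definition is_partial_order (T : finType) (le : rel T) : Prop :=
  [/\ reflexive le, antisymmetric le & transitive le].

Definition downset (T : finType) (le : rel T) (X : {set T}) : Prop :=
  forall x y : T, le y x -> x \in X -> y \in X.

Definition downp (T : finType) (le : rel T) (p : T) : {set T} := [set q | le q p].
Definition upp (T : finType) (le : rel T) (p : T) : {set T} := [set q | le p q].

Definition mpar (T : finType) (le : rel T) : nat :=
  \max_(p : T) (#|downp le p| + #|upp le p|)%N.

Definition dual_families (T : finType) (le : rel T) (FA FB : {set {set T}}) : Prop :=
  (forall A B, A \in FA -> B \in FB -> ~ (A \subset B)) /\
  (forall X : {set T}, downset le X ->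
     (exists2 B, B \in FB & X \subset B) \/ (exists2 A, A \in FA & A \subset X)).

Definition rsum (T : finType) (F : {set {set T}}) (f : {set T} -> R) : R :=
  \big[Rplus/0%R]_(A in F) f A.

From HB Require Import structures.
From mathcomp Require Import all_boot zify.
From Stdlib Require Import Reals Lra Lia.
Set Implicit Arguments. Unset Strict Implicit. Unset Printing Implicit Defensive.

(* Put each point of the poset into a random set S independently with
   probability p = 1/m, and let D be the downset generated by S.  By duality
   either D lies in some B, i.e. S avoids the complement of B, which happens
   with probability (1-p)^(n-|B|) <= e^{-(n-|B|)/m}; or some A lies in D,
   i.e. S meets the upset of every point of A.  Each upset meets at most m^2
   others, so A contains at least |A|/m^2 points with pairwise disjoint upsets,
   each of size at most m-1; S meets all of them with probability at most
   (1 - (1-1/m)^(m-1))^(|A|/m^2) <= (2/3)^(|A|/m^2).  A union bound finishes. *)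

HB.instance Definition _ := Monoid.isComLaw.Build R 0%R Rplus
  (fun x y z => esym (Rplus_assoc x y z)) Rplus_comm Rplus_0_l.
HB.instance Definition _ := Monoid.isComLaw.Build R 1%R Rmult
  (fun x y z => esym (Rmult_assoc x y z)) Rmult_comm Rmult_1_l.
HB.instance Definition _ := Monoid.isMulLaw.Build R 0%R Rmult Rmult_0_l Rmult_0_r.
HB.instance Definition _ :=
  Monoid.isAddLaw.Build R Rmult Rplus Rmult_plus_distr_r Rmult_plus_distr_l.

Definition ind (b : bool) : R := if b then 1%R else 0%R.

Lemma ind_ge0 b : (0 <= ind b)%R.
Proof. by case: b; rewrite /ind; lra. Qed.

Lemma ind_and a b : ind (a && b) = (ind a * ind b)%R.
Proof. by case: a; case: b; rewrite /ind /=; ring. Qed.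

Lemma Rsum_le (I : finType) (P : pred I) (f g : I -> R) :
  (forall i, P i -> f i <= g i)%R ->
  (\big[Rplus/0%R]_(i | P i) f i <= \big[Rplus/0%R]_(i | P i) g i)%R.
Proof.
move=> fg; apply: (big_ind2 (fun x y => x <= y)%R) => //; first lra.
by move=> *; apply: Rplus_le_compat.
Qed.

Lemma Rsum_ge0 (I : finType) (P : pred I) (f : I -> R) :
  (forall i, P i -> 0 <= f i)%R -> (0 <= \big[Rplus/0%R]_(i | P i) f i)%R.
Proof.
move=> f_ge0; apply: (big_ind (fun x => 0 <= x)%R) => //; first lra.
by move=> *; apply: Rplus_le_le_0_compat.
Qed.

Lemma Rsum_ind_ge1 (I : finType) (P : pred I) (b : pred I) i0 :
  P i0 -> b i0 -> (1 <= \big[Rplus/0%R]_(i | P i) ind (b i))%R.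
Proof.
move=> Pi0 bi0; rewrite (bigD1 i0) //= [ind (b i0)]/ind bi0.
have : (0 <= \big[Rplus/0%R]_(i | P i && (i != i0)) ind (b i))%R.
  by apply: Rsum_ge0 => i _; apply: ind_ge0.
lra.
Qed.

Lemma Rprod_seq_bound (I : eqType) (s : seq I) (f : I -> R) c :
  (forall i, i \in s -> 0 <= f i <= c)%R ->
  (0 <= \big[Rmult/1%R]_(i <- s) f i <= c ^ size s)%R.
Proof.
elim: s => [|i s IHs] f_bound; first by rewrite big_nil /=; lra.
have [fi_ge0 fi_le] := f_bound i (mem_head i s).
have [] : (0 <= \big[Rmult/1%R]_(j <- s) f j <= c ^ size s)%R.
  by apply: IHs => j js; apply: f_bound; rewrite inE js orbT.
rewrite big_cons /= => prod_ge0 prod_le.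
by split; [apply: Rmult_le_pos | apply: Rmult_le_compat].
Qed.

Lemma exp_le_exp x y : (x <= y)%R -> (exp x <= exp y)%R.
Proof. by case=> [/exp_increasing/Rlt_le | ->] //; apply: Rle_refl. Qed.

Lemma exp_pow x n : (exp x ^ n = exp (INR n * x))%R.
Proof. by rewrite -Rpower_pow; [rewrite /Rpower ln_exp | exact: exp_pos]. Qed.

Lemma pow_le_exp x n : (-1 <= x)%R -> ((1 + x) ^ n <= exp (INR n * x))%R.
Proof.
move=> x_ge; rewrite -exp_pow; apply: pow_incr.
by have := exp_ineq1_le x; lra.
Qed.

Lemma pow_antitone (q : R) j k : (0 <= q <= 1)%R -> j <= k -> (q ^ k <= q ^ j)%R.
Proof.
move=> q01 le_jk; rewrite -(subnKC le_jk) -plusE pow_add.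
have : (q ^ (k - j) <= 1)%R by rewrite -(pow1 (k - j)); apply: pow_incr.
have : (0 <= q ^ j)%R by apply: pow_le; lra.
have : (0 <= q ^ (k - j))%R by apply: pow_le; lra.
nra.
Qed.

Lemma pow_le_Rpower (c x : R) n :
  (0 < c <= 1)%R -> (x <= INR n)%R -> (c ^ n <= Rpower c x)%R.
Proof.
move=> c01 le_xn; rewrite -Rpower_pow; last lra.
have : (ln c <= 0)%R by rewrite -ln_1; case: (proj2 c01) => [/ln_increasing|->]; lra.
by move=> ln_le0; apply: exp_le_exp; nra.
Qed.

Lemma one_sub_inv_pow_ge (m : nat) : 2 <= m -> (/ 3 <= (1 - / INR m) ^ (m - 1))%R.
Proof.
move=> m_ge2; set k := m - 1.
have k_gt0 : (0 < INR k)%R by apply: (lt_INR 0); apply/ltP; lia.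
have mE : INR m = (INR k + 1)%R by rewrite -S_INR; congr INR; lia.
have inv_k_gt0 := Rinv_0_lt_compat _ k_gt0.
have le3 : ((1 + / INR k) ^ k <= 3)%R.
  apply: Rle_trans (pow_le_exp _ _) _; first lra.
  by rewrite Rinv_r; [exact: exp_le_3 | lra].
have prod1 : ((1 - / INR m) ^ k * (1 + / INR k) ^ k = 1)%R.
  have inv_prod1 : ((1 - / INR m) * (1 + / INR k) = 1)%R by rewrite mE; field; lra.
  by rewrite -Rpow_mult_distr inv_prod1 pow1.
have : (0 <= (1 - / INR m) ^ k)%R.
  by apply: pow_le; rewrite mE; have := Rinv_le_contravar 1 (INR k + 1); rewrite Rinv_1; lra.
have : (0 <= (1 + / INR k) ^ k)%R by apply: pow_le; lra.
nra.
Qed.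

Lemma leq_card_bigcup (T I : finType) (P : pred I) (F : I -> {set T}) :
  #|\bigcup_(i | P i) F i| <= \sum_(i | P i) #|F i|.
Proof.
apply: (big_ind2 (fun (A : {set T}) n => #|A| <= n)); first by rewrite cards0.
  by move=> A1 n1 A2 n2 le1 le2; rewrite cardsU; lia.
by [].
Qed.

Lemma disjoint_setUr (T : finType) (S V W : {set T}) :
  [disjoint S & V :|: W] = [disjoint S & V] && [disjoint S & W].
Proof. by rewrite !(disjoint_sym S) -disjointU; apply: eq_disjoint => x; rewrite !inE. Qed.

Lemma disjoint_set0r (T : finType) (S : {set T}) : [disjoint S & set0].
Proof. by rewrite disjoint_sym; apply: eq_disjoint0 => x; rewrite inE. Qed.

(* Greedy choice: each chosen block rules out at most K points of A. *)
Lemma greedy_disjoint_subseq (T : finType) (U : T -> {set T}) (K : nat) :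
  (forall a, a \in U a) ->
  (forall a, #|[set b | ~~ [disjoint U a & U b]]| <= K) ->
  forall A : {set T}, exists s : seq T, [/\ {subset s <= A},
    pairwise (fun a b => [disjoint U a & U b]) s & #|A| <= size s * K].
Proof.
move=> U_refl U_meet A.
elim: {A}_.+1 {-2}A (ltnSn #|A|) => // n IHn A A_lt.
have [->|[a Aa]] := set_0Vmem A; first by exists [::]; rewrite cards0.
set N := [set b | ~~ [disjoint U a & U b]].
have aN : a \in A :&: N.
  by rewrite !inE Aa -setI_eq0; apply/set0Pn; exists a; rewrite inE U_refl.
have AN_gt0 : 0 < #|A :&: N| by apply/card_gt0P; exists a.
have AN_le : #|A :&: N| <= K by apply: leq_trans (U_meet a); apply/subset_leq_card/subsetIr.
have [|s [sA s_disj As]] := IHn (A :\: N); first by have := cardsID N A; lia.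
exists (a :: s); split.
- by move=> x; rewrite inE => /orP[/eqP-> // | /sA]; rewrite inE => /andP[].
- rewrite pairwise_cons s_disj andbT; apply/allP => b /sA.
  by rewrite !inE negbK => /andP[].
- by have := cardsID N A; rewrite /= mulSn; lia.
Qed.

(* Expectation under the product measure in which each point lies in S
   independently with probability p. *)
Definition weight (T : finType) (p : R) (S : {set T}) : R :=
  \big[Rmult/1%R]_(x : T) (if x \in S then p else 1 - p)%R.
Definition expect (T : finType) (p : R) (F : {set T} -> R) : R :=
  \big[Rplus/0%R]_(S : {set T}) (weight p S * F S)%R.

Section Expectation.
Variables (T : finType) (p : R).
Hypothesis p01 : (0 <= p <= 1)%R.

Lemma expect_prod (g : T -> bool -> R) :
  expect p (fun S => \big[Rmult/1%R]_x g x (x \in S)) =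
  \big[Rmult/1%R]_x (p * g x true + (1 - p) * g x false)%R.
Proof.
rewrite (eq_bigr (fun x => \big[Rplus/0%R]_(b : bool) ((if b then p else 1 - p) * g x b)%R));
  last by move=> x _; rewrite big_bool.
rewrite bigA_distr_bigA /expect.
rewrite (reindex (fun S : {set T} => [ffun x => x \in S])); last first.
  exists (fun f : {ffun T -> bool} => [set x | f x]) => [S _ | f _].
    by apply/setP => x; rewrite inE ffunE.
  by apply/ffunP => x; rewrite ffunE inE.
apply: eq_bigr => S _; rewrite /weight -big_split /=.
by apply: eq_bigr => x _; rewrite ffunE.
Qed.

Lemma eq_expect (F G : {set T} -> R) : F =1 G -> expect p F = expect p G.
Proof. by move=> FG; apply: eq_bigr => S _; rewrite FG. Qed.

Lemma expect_add (F G : {set T} -> R) :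
  expect p (fun S => F S + G S)%R = (expect p F + expect p G)%R.
Proof. by rewrite /expect -big_split; apply: eq_bigr => S _ /=; ring. Qed.

Lemma expect_sub (F G : {set T} -> R) :
  expect p (fun S => F S - G S)%R = (expect p F - expect p G)%R.
Proof.
rewrite [in RHS](@eq_expect F (fun S => (F S - G S) + G S)%R); last by move=> S; ring.
by rewrite expect_add; ring.
Qed.

Lemma expect_sum (I : finType) (P : pred I) (G : I -> {set T} -> R) :
  expect p (fun S => \big[Rplus/0%R]_(i | P i) G i S) =
  \big[Rplus/0%R]_(i | P i) expect p (G i).
Proof.
rewrite /expect (eq_bigr (fun S => \big[Rplus/0%R]_(i | P i) (weight p S * G i S)%R)).
  exact: exchange_big.
by move=> S _; rewrite big_distrr.
Qed.

Lemma weight_ge0 (S : {set T}) : (0 <= weight p S)%R.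
Proof.
apply: (big_ind (fun x => 0 <= x)%R) => [|x y|x _]; first lra.
  exact: Rmult_le_pos.
by case: (x \in S); lra.
Qed.

Lemma expect_le (F G : {set T} -> R) :
  (forall S, F S <= G S)%R -> (expect p F <= expect p G)%R.
Proof.
move=> FG; apply: Rsum_le => S _.
exact: Rmult_le_compat_l (weight_ge0 S) (FG S).
Qed.

Lemma expect_avoid (V : {set T}) :
  expect p (fun S => ind [disjoint S & V]) = ((1 - p) ^ #|V|)%R.
Proof.
pose g x (b : bool) := if b && (x \in V) then 0%R else 1%R.
rewrite (@eq_expect _ (fun S => \big[Rmult/1%R]_x g x (x \in S))); last first.
  move=> S; rewrite /g; case: (boolP [disjoint S & V]) => [SV | ].
    by rewrite big1 // => x _; case Sx: (x \in S); rewrite // (disjointFr SV Sx).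
  rewrite -setI_eq0 => /set0Pn[x]; rewrite inE => /andP[Sx Vx].
  by rewrite (bigD1 x) //= Sx Vx /= Rmult_0_l.
rewrite expect_prod /g (eq_bigr (fun x => if x \in V then (1 - p)%R else 1%R)); last first.
  by move=> x _ /=; case: (x \in V); rewrite /=; ring.
rewrite -big_mkcond big_const; elim: #|V| => //= n ->; ring.
Qed.

Lemma expect1 : expect p (fun _ : {set T} => 1%R) = 1%R.
Proof.
rewrite (@eq_expect _ (fun S => ind [disjoint S & set0])) ?expect_avoid ?cards0 //.
by move=> S; rewrite disjoint_set0r.
Qed.

Lemma expect_avoid_le_exp (V : {set T}) :
  (expect p (fun S => ind [disjoint S & V]) <= exp (- (INR #|V| * p)))%R.
Proof. by rewrite expect_avoid Ropp_mult_distr_r; apply: pow_le_exp; lra. Qed.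

(* Induction on s generalizing V: [ind (S avoids V) * (1 - ind (S avoids U a))]
   is [ind (S avoids V) - ind (S avoids V :|: U a)], and V :|: U a is still
   disjoint from the remaining blocks. *)
Lemma expect_avoid_hit (U : T -> {set T}) (s : seq T) (V : {set T}) :
  pairwise (fun a b => [disjoint U a & U b]) s ->
  (forall a, a \in s -> [disjoint V & U a]) ->
  expect p (fun S => ind [disjoint S & V] *
                     \big[Rmult/1%R]_(a <- s) (1 - ind [disjoint S & U a]))%R
  = ((1 - p) ^ #|V| * \big[Rmult/1%R]_(a <- s) (1 - (1 - p) ^ #|U a|))%R.
Proof.
elim: s V => [|a s IHs] V.
  by move=> _ _; rewrite big_nil Rmult_1_r -expect_avoid; apply: eq_expect => S;
     rewrite big_nil Rmult_1_r.
rewrite pairwise_cons => /andP[a_disj s_disj] V_disj.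
have Va : [disjoint V & U a] by apply: V_disj; rewrite inE eqxx.
have V_disj_s b : b \in s -> [disjoint V & U b] by move=> bs; apply: V_disj; rewrite inE bs orbT.
have VUa_disj_s b : b \in s -> [disjoint V :|: U a & U b].
  by move=> bs; rewrite disjoint_sym disjoint_setUr !(disjoint_sym (U b)) V_disj_s ?(allP a_disj).
rewrite (@eq_expect _ (fun S =>
    ind [disjoint S & V] * \big[Rmult/1%R]_(b <- s) (1 - ind [disjoint S & U b])
  - ind [disjoint S & V :|: U a] * \big[Rmult/1%R]_(b <- s) (1 - ind [disjoint S & U b]))%R);
  last by move=> S; rewrite big_cons disjoint_setUr ind_and; ring.
rewrite expect_sub !IHs // big_cons cardsU (disjoint_setI0 Va) cards0 subn0 pow_add.
ring.
Qed.

Lemma expect_hit_all_le (U : T -> {set T}) (K : nat) (c : R) (A : {set T}) :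
  (forall a, a \in U a) ->
  (forall a, #|[set b | ~~ [disjoint U a & U b]]| <= K) ->
  0 < K -> (0 < c <= 1)%R ->
  (forall a, 1 - (1 - p) ^ #|U a| <= c)%R ->
  (expect p (fun S => ind [forall a in A, ~~ [disjoint S & U a]])
     <= Rpower c (INR #|A| / INR K))%R.
Proof.
move=> U_refl U_meet K_gt0 c01 hit_le.
have [s [sA s_disj As]] := greedy_disjoint_subseq U_refl U_meet A.
have hit01 (S : {set T}) a : (0 <= 1 - ind [disjoint S & U a] <= 1)%R.
  by case: [disjoint _ & _]; rewrite /ind; lra.
apply: Rle_trans (_ : expect p (fun S => ind [disjoint S & set0] *
  \big[Rmult/1%R]_(a <- s) (1 - ind [disjoint S & U a])) <= _)%R.
  apply: expect_le => S; rewrite disjoint_set0r /ind Rmult_1_l.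
  case: forall_inP => [hitA | _]; last first.
    by case: (@Rprod_seq_bound _ s _ 1%R (fun a _ => hit01 S a)).
  by rewrite big1_seq; [lra | move=> a /andP[_ /sA/hitA/negbTE->]; lra].
rewrite expect_avoid_hit // ?cards0 ?Rmult_1_l;
  last by move=> a _; rewrite disjoint_sym disjoint_set0r.
apply: (Rle_trans _ (c ^ size s)).
  apply: (proj2 (Rprod_seq_bound _)) => a _; split; last exact: hit_le.
  suff : ((1 - p) ^ #|U a| <= 1)%R by lra.
  by apply: (@pow_antitone _ 0) => //; lra.
apply: pow_le_Rpower => //.
have K_pos : (0 < INR K)%R by apply: (lt_INR 0); apply/ltP.
apply: (Rmult_le_reg_r _ _ _ K_pos); rewrite /Rdiv Rmult_assoc Rinv_l; last lra.
by rewrite Rmult_1_r -mult_INR; apply: le_INR; apply/leP.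
Qed.

End Expectation.

Section Poset.
Variables (T : finType) (le : rel T).
Hypotheses (le_refl : reflexive le) (le_trans : transitive le).

Definition downclosure (S : {set T}) : {set T} := [set y | [exists x in S, le y x]].

Lemma downset_downclosure (S : {set T}) : downset le (downclosure S).
Proof.
move=> x y le_yx; rewrite !inE => /exists_inP[z Sz le_xz].
by apply/exists_inP; exists z => //; apply: le_trans le_xz.
Qed.

Lemma subset_downclosure (S : {set T}) : S \subset downclosure S.
Proof. by apply/subsetP => x Sx; rewrite inE; apply/exists_inP; exists x. Qed.

Lemma mem_downclosure (S : {set T}) y : (y \in downclosure S) = ~~ [disjoint S & upp le y].
Proof.
rewrite inE -setI_eq0; apply/exists_inP/set0Pn => [[x Sx le_yx] | [x]].
  by exists x; rewrite !inE Sx.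
by rewrite !inE => /andP[Sx le_yx]; exists x.
Qed.

Lemma dual_cover (FA FB : {set {set T}}) (S : {set T}) :
  dual_families le FA FB ->
  (1 <= rsum FB (fun B => ind [disjoint S & ~: B])
        + rsum FA (fun A => ind (A \subset downclosure S)))%R.
Proof.
move=> [_ cover]; rewrite /rsum.
have sumB_ge0 : (0 <= \big[Rplus/0%R]_(B in FB) ind [disjoint S & ~: B])%R.
  by apply: Rsum_ge0 => B _; apply: ind_ge0.
have sumA_ge0 : (0 <= \big[Rplus/0%R]_(A in FA) ind (A \subset downclosure S))%R.
  by apply: Rsum_ge0 => A _; apply: ind_ge0.
have [[B FB_B DB] | [A FA_A AD]] := cover _ (@downset_downclosure S).
  suff : (1 <= \big[Rplus/0%R]_(B in FB) ind [disjoint S & ~: B])%R by lra.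
  apply: (Rsum_ind_ge1 FB_B).
  by rewrite -subsets_disjoint (subset_trans (@subset_downclosure S) DB).
suff : (1 <= \big[Rplus/0%R]_(A in FA) ind (A \subset downclosure S))%R by lra.
exact: (Rsum_ind_ge1 FA_A).
Qed.

Lemma leq_mpar x : #|downp le x| + #|upp le x| <= mpar le.
Proof. exact: (leq_bigmax x). Qed.

Lemma card_downp_gt0 x : 0 < #|downp le x|.
Proof. by apply/card_gt0P; exists x; rewrite inE le_refl. Qed.

Lemma card_upp_gt0 x : 0 < #|upp le x|.
Proof. by apply/card_gt0P; exists x; rewrite inE le_refl. Qed.

Lemma card_upp_lt_mpar x : #|upp le x| < mpar le.
Proof. by have := leq_mpar x; have := card_downp_gt0 x; lia. Qed.

Lemma card_meet_upp_le a : #|[set b | ~~ [disjoint upp le a & upp le b]]| <= mpar le ^ 2.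
Proof.
have meet_sub : [set b | ~~ [disjoint upp le a & upp le b]] \subset
                \bigcup_(c in upp le a) downp le c.
  apply/subsetP => b; rewrite inE -setI_eq0 => /set0Pn[c].
  by rewrite !inE => /andP[le_ac le_bc]; apply/bigcupP; exists c; rewrite ?inE.
apply: leq_trans (subset_leq_card meet_sub) _.
apply: leq_trans (leq_card_bigcup _ _) _.
have : \sum_(c in upp le a) #|downp le c| <= \sum_(c in upp le a) mpar le.
  by apply: leq_sum => c _; have := leq_mpar c; lia.
move/leq_trans; apply.
by rewrite sum_nat_const /=; have := card_upp_lt_mpar a; nia.
Qed.

Hypothesis T_gt0 : 0 < #|T|.

Lemma mpar_ge2 : 2 <= mpar le.
Proof.
move/card_gt0P: T_gt0 => [x _].
by have := card_upp_gt0 x; have := card_downp_gt0 x; have := leq_mpar x; lia.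
Qed.

Let p := (/ INR (mpar le))%R.

Lemma mpar_inv01 : (0 <= p <= 1)%R.
Proof.
have m_ge2 : (2 <= INR (mpar le))%R by apply: (le_INR 2); apply/leP; exact: mpar_ge2.
split; first by left; apply: Rinv_0_lt_compat; lra.
by rewrite -Rinv_1; apply: Rinv_le_contravar; lra.
Qed.

Lemma expect_avoid_compl_le (B : {set T}) :
  (expect p (fun S => ind [disjoint S & ~: B])
     <= exp (- (INR #|T| - INR #|B|) / INR (mpar le)))%R.
Proof.
apply: Rle_trans (expect_avoid_le_exp mpar_inv01 _) _.
have -> : INR #|~: B| = (INR #|T| - INR #|B|)%R by rewrite -(cardsC B) plus_INR; ring.
by rewrite /Rdiv /p Ropp_mult_distr_l; apply: Rle_refl.
Qed.

Lemma expect_subset_downclosure_le (A : {set T}) :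
  (expect p (fun S => ind (A \subset downclosure S))
     <= Rpower (3 / 4) (INR #|A| / INR (mpar le ^ 2)))%R.
Proof.
rewrite (@eq_expect _ _ _ (fun S => ind [forall a in A, ~~ [disjoint S & upp le a]])); last first.
  move=> S; congr ind; apply/subsetP/forall_inP => hit a Aa.
    by rewrite -mem_downclosure hit.
  by rewrite mem_downclosure hit.
apply: (@expect_hit_all_le _ _ mpar_inv01 (upp le) _ (3 / 4) A) => [a | | | | a].
- by rewrite inE le_refl.
- exact: card_meet_upp_le.
- by have := mpar_ge2; rewrite /=; nia.
- lra.
have q_pow := one_sub_inv_pow_ge mpar_ge2.
have : ((1 - p) ^ (mpar le - 1) <= (1 - p) ^ #|upp le a|)%R.
  apply: pow_antitone; first by have := mpar_inv01; lra.
  by have := card_upp_lt_mpar a; lia.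
rewrite /p in q_pow *; lra.
Qed.

End Poset.

Theorem lemma4 (T : finType) (le : rel T) (FA FB : {set {set T}}) :
  is_partial_order le ->
  (0 < #|T|)%N ->
  (forall A, A \in FA -> downset le A) ->
  (forall B, B \in FB -> downset le B) ->
  dual_families le FA FB ->
  (rsum FA (fun A => Rpower (3 / 4) (INR #|A| / INR (mpar le ^ 2)))
   + rsum FB (fun B => exp (- (INR #|T| - INR #|B|) / INR (mpar le))) >= 1)%R.
Proof.
move=> [le_refl _ le_trans] T_gt0 _ _ dualAB.
have p01 := mpar_inv01 le_refl T_gt0.
have := expect_le p01 (fun S => dual_cover le_refl le_trans S dualAB).
rewrite expect1 expect_add /rsum !expect_sum.
have : (\big[Rplus/0%R]_(B in FB) expect (/ INR (mpar le)) (fun S => ind [disjoint S & ~: B])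
        <= rsum FB (fun B => exp (- (INR #|T| - INR #|B|) / INR (mpar le))))%R.
  by apply: Rsum_le => B _; exact: expect_avoid_compl_le.
have : (\big[Rplus/0%R]_(A in FA)
          expect (/ INR (mpar le)) (fun S => ind (A \subset downclosure le S))
        <= rsum FA (fun A => Rpower (3 / 4) (INR #|A| / INR (mpar le ^ 2))))%R.
  by apply: Rsum_le => A _; exact: expect_subset_downclosure_le.
rewrite /rsum; lra.
Qed.
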